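(* Let $\mathbf{A}\in\mathbb{C}^{N\times N}$ be a nonzero matrix (the weighted adjacency matrix of a graph), and let $\lambda_{\max}$ denote an eigenvalue of $\mathbf{A}$ of largest magnitude, i.e. $|\lambda_{\max}|\ge|\lambda|$ for every eigenvalue $\lambda$ of $\mathbf{A}$. Let $\lambda_m,\lambda_n\in\mathbb{C}$ be two distinct eigenvalues of $\mathbf{A}$ with corresponding eigenvectors $\mathbf{v}_m,\mathbf{v}_n$, normalized so that $\|\mathbf{v}_m\|_1=\|\mathbf{v}_n\|_1=1$. If $\big||\lambda_{\max}|-\lambda_m\big|<\big||\lambda_{\max}|-\lambda_n\big|$ (i.e. $\lambda_m$ is closer than $\lambda_n$ to the real number $|\lambda_{\max}|$ in the complex plane), then $\mathrm{TV}_G(\mathbf{v}_m)<\mathrm{TV}_G(\mathbf{v}_n)$.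
   Context: For a graph signal $\mathbf{s}\in\mathbb{C}^N$, the total variation on the graph is $\mathrm{TV}_G(\mathbf{s})=\|\mathbf{s}-\mathbf{A}^{\mathrm{norm}}\mathbf{s}\|_1$, where $\mathbf{A}^{\mathrm{norm}}=\frac{1}{|\lambda_{\max}|}\mathbf{A}$ is the normalized adjacency matrix. *)

From HB Require Import structures.
From mathcomp Require Import all_boot all_order all_algebra.
From mathcomp Require Import complex reals.
Set Implicit Arguments. Unset Strict Implicit. Unset Printing Implicit Defensive.
Import Order.TTheory GRing.Theory Num.Theory.
Local Open Scope ring_scope.
Local Open Scope complex_scope.

Definition l1norm (R : realType) (N : nat) (v : 'cV[R[i]]_N) : R[i] :=
  \sum_(k < N) `|v k 0|.

Definition Anorm (R : realType) (N : nat) (A : 'M[R[i]]_N) (lmax : R[i]) :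
  'M[R[i]]_N := (`|lmax|)^-1 *: A.

Definition TV_G (R : realType) (N : nat) (A : 'M[R[i]]_N) (lmax : R[i])
  (s : 'cV[R[i]]_N) : R[i] := l1norm (s - Anorm A lmax *m s).

(** For an eigenvector [v] of [A] with eigenvalue [l] and [c := |lmax|],
    [v - A v / c = (1 - l / c) v], so [TV_G v = |c - l| / c * |v|_1 = |c - l| / c]
    when [|v|_1 = 1].  Comparing two such eigenvectors reduces to comparing
    [|c - l|], provided [c > 0]; and [c > 0] because the two distinct
    eigenvalues [lm] and [ln] cannot both have modulus at most [0]. *)

From HB Require Import structures.
From mathcomp Require Import all_boot all_order all_algebra.
From mathcomp Require Import complex reals.
Set Implicit Arguments. Unset Strict Implicit. Unset Printing Implicit Defensive.
Import Order.TTheory GRing.Theory Num.Theory.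
Local Open Scope ring_scope.
Local Open Scope complex_scope.

Section Eigenvalues.

Variables (F : fieldType) (n : nat).

Lemma eigenvalue_det (A : 'M[F]_n) a : eigenvalue A a = (\det (a%:M - A) == 0).
Proof.
apply/eigenvalueP/det0P => [[v Av_av v_nz] | [v v_nz Av_av]]; exists v => //.
  by rewrite mulmxBr Av_av mul_mx_scalar subrr.
by apply/eqP; rewrite -mul_mx_scalar eq_sym -subr_eq0 -mulmxBr Av_av.
Qed.

Lemma eigenvalue_trmx (A : 'M[F]_n) a : eigenvalue A^T a = eigenvalue A a.
Proof. by rewrite !eigenvalue_det -det_tr linearB /= trmxK tr_scalar_mx. Qed.

(* [eigenvalue] is defined through row eigenvectors [v *m A = a *: v]. *)
Lemma col_eigenvalue (A : 'M[F]_n) a (v : 'cV[F]_n) :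
  v != 0 -> A *m v = a *: v -> eigenvalue A a.
Proof.
move=> v_nz Av_av; rewrite -eigenvalue_trmx.
apply/eigenvalueP; exists v^T; last by rewrite trmx_eq0.
by rewrite -trmx_mul Av_av linearZ.
Qed.

End Eigenvalues.

Section L1Norm.

Variables (R : realType) (N : nat).

Lemma l1norm0 : l1norm (0 : 'cV[R[i]]_N) = 0.
Proof. by rewrite /l1norm big1 // => j _; rewrite mxE normr0. Qed.

Lemma l1normZ (k : R[i]) (v : 'cV[R[i]]_N) : l1norm (k *: v) = `|k| * l1norm v.
Proof. by rewrite /l1norm mulr_sumr; apply: eq_bigr => j _; rewrite mxE normrM. Qed.

Lemma l1norm1_neq0 (v : 'cV[R[i]]_N) : l1norm v = 1 -> v != 0.
Proof. by move=> nv; apply: contra_eq_neq nv => ->; rewrite l1norm0 eq_sym oner_neq0. Qed.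

End L1Norm.

Lemma TV_G_eigenvector (R : realType) N (A : 'M[R[i]]_N) lmax l (v : 'cV[R[i]]_N) :
  0 < `|lmax| -> A *m v = l *: v -> l1norm v = 1 ->
  TV_G A lmax v = `| `|lmax| - l | / `|lmax|.
Proof.
move=> lmax_gt0 Av_lv nv.
rewrite /TV_G /Anorm -scalemxAl Av_lv scalerA -{1}(scale1r v) -scalerBl.
rewrite l1normZ nv mulr1.
have -> : 1 - `|lmax|^-1 * l = (`|lmax| - l) / `|lmax|.
  by rewrite mulrBl divff ?gt_eqF // mulrC.
by rewrite normrM normfV normr_id.
Qed.

Lemma norm_bound_gt0 (R : numDomainType) (V : normedZmodType R) (x y : V) (r : R) :
  x != y -> `|x| <= r -> `|y| <= r -> 0 < r.
Proof.
move=> x_neq_y x_le y_le; rewrite lt_neqAle (le_trans _ x_le) // andbT.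
apply: contra_neq x_neq_y => r0.
by move: x_le y_le; rewrite -r0 !normr_le0 => /eqP -> /eqP ->.
Qed.

Theorem theorem2 (R : realType) (N : nat) (A : 'M[R[i]]_N)
  (lmax lm ln : R[i]) (vm vn : 'cV[R[i]]_N) :
  A != 0 ->
  eigenvalue A lmax ->
  (forall l : R[i], eigenvalue A l -> `|l| <= `|lmax|) ->
  lm != ln ->
  A *m vm = lm *: vm -> A *m vn = ln *: vn ->
  l1norm vm = 1 -> l1norm vn = 1 ->
  `|Num.norm lmax - lm| < `|Num.norm lmax - ln| ->
  TV_G A lmax vm < TV_G A lmax vn.
Proof.
move=> _ _ lmax_max lm_neq_ln Avm Avn nvm nvn closer.
have lm_le := lmax_max _ (col_eigenvalue (l1norm1_neq0 nvm) Avm).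
have ln_le := lmax_max _ (col_eigenvalue (l1norm1_neq0 nvn) Avn).
have lmax_gt0 : 0 < `|lmax| := norm_bound_gt0 lm_neq_ln lm_le ln_le.
rewrite (TV_G_eigenvector lmax_gt0 Avm nvm) (TV_G_eigenvector lmax_gt0 Avn nvn).
by rewrite ltr_pM2r // invr_gt0.
Qed.
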